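(* Fix an observation sequence $\{s_t,a_t\}_{t\in\mathbb Z}$, $\theta,\hat\theta\in\Theta$, a time $t$, an indexed family $\{\rho^\theta_t\}_{t\in\mathbb Z}$ as below, and any probability measure $\varphi$ on $\mathcal O\times\{0,1\}$. Then $$\big\|\varphi K^{\hat\theta,\theta}_{F,t}-\varphi K^{\theta,\theta}_{F,t}\big\|_{TV}\le\frac{\max_{o_{t-1},o_t,b_t}h(\theta;o_{t-1},s_t,a_t,o_t,b_t)}{\min_{o_{t-1},o_t,b_t}h(\theta;o_{t-1},s_t,a_t,o_t,b_t)}\cdot\frac{L_{\theta,\|\hat\theta-\theta\|_2}\,\|\hat\theta-\theta\|_2}{\min_{o_{t-1},o_t,b_t}h(\hat\theta;o_{t-1},s_t,a_t,o_t,b_t)}.$$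
   Context: $\mathcal S,\mathcal A,\mathcal O$ are finite sets; $\Theta=\Theta_{hi}\times\Theta_{lo}\times\Theta_b$ is a convex compact subset of a Euclidean space. There are policies $\pi_{hi}(o\mid s;\theta_{hi})$ (distribution on $\mathcal O$), $\pi_{lo}(a\mid s,o;\theta_{lo})$ (distribution on $\mathcal A$), $\pi_b(b\mid s,o';\theta_b)$ (distribution on $\{0,1\}$); standing assumption: on an open set $\tilde\Theta\supseteq\Theta$ they are defined, strictly positive and continuously differentiable in $\theta$. For fixed $\zeta\in(0,1)$, $\bar\pi_{hi}(o_t\mid s_t,o_{t-1},b_t;\theta_{hi})$ equals $\pi_{hi}(o_t\mid s_t;\theta_{hi})$ if $b_t=1$, $1-\zeta+\zeta/|\mathcal O|$ if $b_t=0,o_t=o_{t-1}$, $\zeta/|\mathcal O|$ if $b_t=0,o_t\ne o_{t-1}$. Define $h(\theta;o_{t-1},s_t,a_t,o_t,b_t)=\pi_b(b_t\mid s_t,o_{t-1};\theta_b)\bar\pi_{hi}(o_t\mid s_t,o_{t-1},b_t;\theta_{hi})\pi_{lo}(a_t\mid s_t,o_t;\theta_{lo})$. For $\theta\in\Theta,\delta>0$, $L_{\theta,\delta}$ is the smallest constant $L$ such that for all values of $(o_{t-1},s_t,a_t,o_t,b_t)$, $\tilde\theta\mapsto h(\tilde\theta;o_{t-1},s_t,a_t,o_t,b_t)$ is $L$-Lipschitz (in $\|\cdot\|_2$) on $\{\tilde\theta\in\Theta:\|\tilde\theta-\theta\|_2\le\delta\}$. Given the observation sequence, the backward operator $B^\theta_t$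 maps a probability measure $\rho$ on $\mathcal O\times\{0,1\}$ to the probability measure $B^\theta_t\rho(o_t,b_t)\propto\sum_{o_{t+1},b_{t+1}}h(\theta;o_t,s_{t+1},a_{t+1},o_{t+1},b_{t+1})\rho(o_{t+1},b_{t+1})$ (normalized). $\{\rho^\theta_t\}_{t\in\mathbb Z}$ is a family of strictly positive probability measures on $\mathcal O\times\{0,1\}$ with $B^\theta_t\rho^\theta_{t+1}=\rho^\theta_t$ for all $t$. For $\hat\theta\in\Theta$, the forward smoothing operator is $\varphi K^{\hat\theta,\theta}_{F,t}(o_t,b_t)=C^{\hat\theta,\theta}_F\sum_{o_{t-1},b_{t-1}}\frac{h(\hat\theta;o_{t-1},s_t,a_t,o_t,b_t)\rho^\theta_t(o_t,b_t)\varphi(o_{t-1},b_{t-1})}{\sum_{o'_t,b'_t}h(\theta;o_{t-1},s_t,a_t,o'_t,b'_t)\rho^\theta_t(o'_t,b'_t)}$, where $C^{\hat\theta,\theta}_F>0$ normalizes the result to a probability measure. $\|\nu_1-\nu_2\|_{TV}=\frac12\sum|\nu_1-\nu_2|$. *)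

From HB Require Import structures.
From mathcomp Require Import all_boot all_order all_algebra.
From mathcomp Require Import all_classical all_reals all_analysis.
Set Implicit Arguments. Unset Strict Implicit. Unset Printing Implicit Defensive.
Import Order.TTheory GRing.Theory Num.Theory.
Import numFieldNormedType.Exports.
Local Open Scope classical_set_scope.
Local Open Scope ring_scope.

(* Parameters theta = (theta_hi, theta_lo, theta_b) in R^d1 x R^d2 x R^d3.
   Access: th.1.1 = theta_hi, th.1.2 = theta_lo, th.2 = theta_b. *)
Definition param (R : realType) (d1 d2 d3 : nat) :=
  ('rV[R]_d1 * 'rV[R]_d2 * 'rV[R]_d3)%type.

Definition norm2 (R : realType) d1 d2 d3 (x : param R d1 d2 d3) : R :=
  Num.sqrt (\sum_i (x.1.1 ord0 i) ^+ 2 + \sum_i (x.1.2 ord0 i) ^+ 2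
            + \sum_i (x.2 ord0 i) ^+ 2).

Definition psub (R : realType) d1 d2 d3 (x y : param R d1 d2 d3)
  : param R d1 d2 d3 := (x.1.1 - y.1.1, x.1.2 - y.1.2, x.2 - y.2).

Definition Theta (R : realType) d1 d2 d3 (Thi : set 'rV[R]_d1)
  (Tlo : set 'rV[R]_d2) (Tb : set 'rV[R]_d3) : set (param R d1 d2 d3) :=
  Thi `*` Tlo `*` Tb.

Definition convex_param (R : realType) d1 d2 d3 (T : set (param R d1 d2 d3)) :=
  forall (x y : param R d1 d2 d3) (l : R), T x -> T y -> 0 <= l <= 1 ->
    T (l *: x.1.1 + (1 - l) *: y.1.1, l *: x.1.2 + (1 - l) *: y.1.2,
       l *: x.2 + (1 - l) *: y.2).

Definition C1_on (R : realType) n (U : set 'rV[R]_n) (f : 'rV[R]_n -> R) :=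
  (forall x, U x -> differentiable f x) /\
  (forall v x, U x -> {for x, continuous (fun y => 'D_v f y)}).

(* Policies:  pihi s o th = pi_hi(o | s; th),
              pilo s o a th = pi_lo(a | s, o; th),
              pib s o' b th = pi_b(b | s, o'; th). *)
Definition standing_assumption (R : realType) (S A O : finType) d1 d2 d3
  (Thi : set 'rV[R]_d1) (Tlo : set 'rV[R]_d2) (Tb : set 'rV[R]_d3)
  (pihi : S -> O -> 'rV[R]_d1 -> R) (pilo : S -> O -> A -> 'rV[R]_d2 -> R)
  (pib : S -> O -> bool -> 'rV[R]_d3 -> R) :=
  exists (Uhi : set 'rV[R]_d1) (Ulo : set 'rV[R]_d2) (Ub : set 'rV[R]_d3),
    [/\ open Uhi, open Ulo & open Ub] /\
    [/\ Thi `<=` Uhi, Tlo `<=` Ulo & Tb `<=` Ub] /\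
    (forall s, forall x, Uhi x ->
       (forall o, 0 < pihi s o x) /\ \sum_o pihi s o x = 1) /\
    (forall s o, forall x, Ulo x ->
       (forall a, 0 < pilo s o a x) /\ \sum_a pilo s o a x = 1) /\
    (forall s o, forall x, Ub x ->
       (forall b, 0 < pib s o b x) /\ \sum_b pib s o b x = 1) /\
    (forall s o, C1_on Uhi (pihi s o)) /\
    (forall s o a, C1_on Ulo (pilo s o a)) /\
    (forall s o b, C1_on Ub (pib s o b)).

Definition pibar (R : realType) (S O : finType) d1 (zeta : R)
  (pihi : S -> O -> 'rV[R]_d1 -> R) (oprev : O) (st : S) (b : bool) (o : O)
  (x : 'rV[R]_d1) : R :=
  if b then pihi st o x
  else if o == oprev then 1 - zeta + zeta / #|O|%:R else zeta / #|O|%:R.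

Definition hfun (R : realType) (S A O : finType) d1 d2 d3 (zeta : R)
  (pihi : S -> O -> 'rV[R]_d1 -> R) (pilo : S -> O -> A -> 'rV[R]_d2 -> R)
  (pib : S -> O -> bool -> 'rV[R]_d3 -> R) (th : param R d1 d2 d3)
  (oprev : O) (st : S) (at_ : A) (o : O) (b : bool) : R :=
  pib st oprev b th.2 * pibar zeta pihi oprev st b o th.1.1 * pilo st o at_ th.1.2.

(* measures on O x {0,1} are represented by their mass functions *)
Definition is_prob (R : realType) (O : finType) (p : O -> bool -> R) :=
  (forall o b, 0 <= p o b) /\ \sum_o \sum_b p o b = 1.

Definition is_pos_prob (R : realType) (O : finType) (p : O -> bool -> R) :=
  (forall o b, 0 < p o b) /\ \sum_o \sum_b p o b = 1.

Definition normalize (R : realType) (O : finType) (f : O -> bool -> R)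
  : O -> bool -> R :=
  fun o b => f o b / \sum_o' \sum_b' f o' b'.

Definition tv (R : realType) (O : finType) (p q : O -> bool -> R) : R :=
  2^-1 * \sum_o \sum_b `|p o b - q o b|.

Definition backward (R : realType) (S A O : finType) d1 d2 d3 (zeta : R)
  pihi pilo pib (s : int -> S) (a : int -> A) (th : param R d1 d2 d3)
  (t : int) (rho : O -> bool -> R) : O -> bool -> R :=
  normalize (fun o b => \sum_o' \sum_b'
    @hfun R S A O d1 d2 d3 zeta pihi pilo pib th o (s (t + 1)) (a (t + 1)) o' b'
      * rho o' b').

(* forward smoothing operator  phi K^{thh,th}_{F,t}, with rhot = rho^th_t *)
Definition forward (R : realType) (S A O : finType) d1 d2 d3 (zeta : R)
  pihi pilo pib (s : int -> S) (a : int -> A) (thh th : param R d1 d2 d3)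
  (t : int) (rhot : O -> bool -> R) (phi : O -> bool -> R) : O -> bool -> R :=
  normalize (fun o b => \sum_op \sum_bp
    @hfun R S A O d1 d2 d3 zeta pihi pilo pib thh op (s t) (a t) o b * rhot o b
      * phi op bp
    / (\sum_o' \sum_b'
        @hfun R S A O d1 d2 d3 zeta pihi pilo pib th op (s t) (a t) o' b'
          * rhot o' b')).

Definition hmax (R : realType) (S A O : finType) d1 d2 d3 (zeta : R)
  pihi pilo pib (s : int -> S) (a : int -> A) (th : param R d1 d2 d3)
  (t : int) : R :=
  sup (range (fun x : O * O * bool =>
    @hfun R S A O d1 d2 d3 zeta pihi pilo pib th x.1.1 (s t) (a t) x.1.2 x.2)).

Definition hmin (R : realType) (S A O : finType) d1 d2 d3 (zeta : R)
  pihi pilo pib (s : int -> S) (a : int -> A) (th : param R d1 d2 d3)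
  (t : int) : R :=
  inf (range (fun x : O * O * bool =>
    @hfun R S A O d1 d2 d3 zeta pihi pilo pib th x.1.1 (s t) (a t) x.1.2 x.2)).

Definition Lip_const (R : realType) (S A O : finType) d1 d2 d3 (zeta : R)
  pihi pilo pib (Thi : set 'rV[R]_d1) (Tlo : set 'rV[R]_d2)
  (Tb : set 'rV[R]_d3) (th : param R d1 d2 d3) (delta : R) : R :=
  inf [set L : R | 0 <= L /\
    forall (op : O) (st : S) (at_ : A) (o : O) (b : bool)
           (x y : param R d1 d2 d3),
      Theta Thi Tlo Tb x -> Theta Thi Tlo Tb y ->
      norm2 (psub x th) <= delta -> norm2 (psub y th) <= delta ->
      `|@hfun R S A O d1 d2 d3 zeta pihi pilo pib x op st at_ o b
        - @hfun R S A O d1 d2 d3 zeta pihi pilo pib y op st at_ o b|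
      <= L * norm2 (psub x y)].

From HB Require Import structures.
From mathcomp Require Import all_boot all_order all_algebra.
From mathcomp Require Import all_classical all_reals all_analysis.
From mathcomp Require Import ring lra.
Set Implicit Arguments. Unset Strict Implicit. Unset Printing Implicit Defensive.
Import Order.TTheory GRing.Theory Num.Theory.
Import numFieldNormedType.Exports.
Local Open Scope classical_set_scope.
Local Open Scope ring_scope.

(* Both forward measures are normalisations of u = sum_prev h(th^) rho phi / Z
   and v = sum_prev h(th) rho phi / Z, with the same normaliser Z built from
   th, so v already has mass one.  As h is C^1 near the compact convex Theta it
   is Lipschitz on Theta, whence |h(th^) - h(th)| <= L |th^ - th| <= c h(th^)
   with c = L |th^ - th| / min h(th^).  Thus |u - v| <= c u pointwise, and
   renormalising u costs nothing more: TV(u / |u|, v) <= sum |u - v| / |u| <= c. *)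

Section RealFacts.
Variable R : realType.

Lemma prob_entry_le1 (I : finType) (F : I -> R) i :
  (forall j, 0 <= F j) -> \sum_j F j = 1 -> F i <= 1.
Proof. by move=> F0 <-; rewrite (bigD1 i) //= lerDl sumr_ge0. Qed.

Lemma normr_mul3B_le (a b c a' b' c' : R) :
  `|b| <= 1 -> `|c| <= 1 -> `|a'| <= 1 -> `|b'| <= 1 ->
  `|a * b * c - a' * b' * c'| <= `|a - a'| + `|b - b'| + `|c - c'|.
Proof.
move=> b1 c1 a'1 b'1.
have -> : a * b * c - a' * b' * c' =
    (a - a') * (b * c) + (b - b') * (a' * c) + (c - c') * (a' * b') by ring.
have le_mul x y z : `|y| <= 1 -> `|z| <= 1 -> `|x * (y * z)| <= `|x|.
  move=> y1 z1; rewrite !normrM -[leRHS]mulr1; apply: ler_wpM2l => //.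
  by rewrite -[1]mulr1; apply: ler_pM.
apply: (le_trans (ler_normD _ _)); apply: lerD; last exact: le_mul.
by apply: (le_trans (ler_normD _ _)); apply: lerD; apply: le_mul.
Qed.

Lemma ler_inf_mulr (E : set R) z d : E !=set0 -> 0 <= d ->
  (forall L, E L -> z <= L * d) -> z <= inf E * d.
Proof.
move=> [L0 EL0] d0 zE; have [d00|dn0] := eqVneq d 0.
  by have := zE _ EL0; rewrite d00 !mulr0.
have d_gt0 : 0 < d by rewrite lt_def dn0.
rewrite -ler_pdivrMr //; apply: lb_le_inf; first by exists L0.
by move=> L EL; rewrite ler_pdivrMr // zE.
Qed.

Section FiniteRange.
Variables (I : finType) (F : I -> R).

Let normr_le_sum j : `|F j| <= \sum_i `|F i|.
Proof. by rewrite (bigD1 j) //= lerDl sumr_ge0. Qed.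

Lemma inf_range_fin_le i : inf (range F) <= F i.
Proof.
apply: ge_inf; last by exists i.
exists (- \sum_i `|F i|) => _ [j _ <-]; rewrite lerNl.
by rewrite (le_trans _ (normr_le_sum j)) // ler_normr lexx orbT.
Qed.

Lemma inf_range_fin_le_sup (i : I) : inf (range F) <= sup (range F).
Proof.
apply: (le_trans (inf_range_fin_le i)); apply: ub_le_sup; last by exists i.
exists (\sum_i `|F i|) => _ [j _ <-]; exact: le_trans (ler_norm _) (normr_le_sum j).
Qed.

Lemma inf_range_fin_gt0 (i0 : I) : (forall i, 0 < F i) -> 0 < inf (range F).
Proof.
move=> F_gt0; apply: (lt_le_trans (F_gt0 [arg min_(i < i0) F i]%O)).
apply: lb_le_inf => [|_ [i _ <-]]; first by exists (F i0), i0.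
by case: (@arg_minP _ _ _ i0 xpredT F erefl) => j _; apply.
Qed.

End FiniteRange.
End RealFacts.

Section LipschitzC1.
Variable R : realType.

Definition enorm n (v : 'rV[R]_n) : R := Num.sqrt (\sum_j v ord0 j ^+ 2).

Lemma normr_entry_le_enorm n (v : 'rV[R]_n) i : `|v ord0 i| <= enorm v.
Proof.
rewrite -sqrtr_sqr ler_sqrt ?sumr_ge0 // => [|j _]; last exact: sqr_ge0.
by rewrite (bigD1 i) //= lerDl sumr_ge0 // => j _; exact: sqr_ge0.
Qed.

Lemma continuous_compact_bounded (T : topologicalType) (K : set T) (g : T -> R) :
  compact K -> {in K, continuous g} ->
  exists2 M, 0 <= M & forall z, K z -> `|g z| <= M.
Proof.
move=> cK cg; have cgK : compact (g @` K).
  by apply: continuous_compact => //; exact: continuous_in_subspaceT.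
have [M [_ HM]] := compact_bounded cgK.
exists (Num.max 0 (M + 1)); first by rewrite le_max lexx.
move=> z Kz; rewrite le_max; apply/orP; right.
by apply: HM; [rewrite ltrDl | exists z].
Qed.

Lemma is_derive_line (V : normedModType R) (f : V -> R) (v y : V) (r : R) :
  derivable f (r *: v + y) v ->
  is_derive r 1 (fun q : R => f (q *: v + y)) ('D_v f (r *: v + y)).
Proof.
have E : (fun h : R => h^-1 *: (((fun q : R => f (q *: v + y)) \o shift r) (h *: 1)
                                 - f (r *: v + y)))
       = (fun h : R => h^-1 *: ((f \o shift (r *: v + y)) (h *: v) - f (r *: v + y))).
  by apply: funext => h /=; rewrite /shift /= [h%:A]mulr1 scalerDl addrA.
by move=> d; apply: DeriveDef; rewrite /derivable /derive E.
Qed.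

Lemma convex_set_segment (V : lmodType R) (K : set (convex_lmodType V)) x y r :
  convex_set K -> K x -> K y -> 0 <= r <= 1 -> K (r *: (x - y) + y).
Proof.
move=> cK Kx Ky /andP[r0 r1].
have := cK x y (Itv01 r0 r1); rewrite !inE => /(_ Kx Ky).
by congr K; rewrite /conv /= scalerBr scalerBl scale1r -addrA [- _ + _]addrC.
Qed.

Lemma mean_value_convex (V : normedModType R) (U K : set V) (f : V -> R) :
  K `<=` U -> convex_set (K : set (convex_lmodType V)) ->
  (forall x, U x -> differentiable f x) ->
  forall x y, K x -> K y -> exists2 z, K z & f x - f y = 'D_(x - y) f z.
Proof.
move=> KU cK df x y Kx Ky.
pose line r := r *: (x - y) + y.
have Kline r : 0 <= r <= 1 -> K (line r) by exact: convex_set_segment.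
have -> : f x - f y = f (line 1) - f (line 0).
  by rewrite /line scale1r scale0r add0r subrK.
have [c c01 ->] : exists2 c, c \in `[0, 1]%R &
    f (line 1) - f (line 0) = 'D_(x - y) f (line c) * (1 - 0).
  apply: (@MVT_segment _ (f \o line) (fun r => 'D_(x - y) f (line r))) => // [r|].
    rewrite in_itv /= => /andP[r0 r1].
    by apply/is_derive_line/diff_derivable/df/KU/Kline; rewrite !ltW.
  apply: continuous_in_subspaceT => r; rewrite inE /= in_itv /= => r01.
  apply: (@continuous_comp _ _ _ line f).
    by apply: continuousD; [exact: scalel_continuous | exact: cst_continuous].
  exact/differentiable_continuous/df/KU/Kline.
by exists (line c); [apply: Kline; move: c01; rewrite in_itv | rewrite subr0 mulr1].
Qed.

Lemma C1_lipschitz n (U K : set 'rV[R]_n) (f : 'rV[R]_n -> R) :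
  K `<=` U -> compact K -> convex_set (K : set (convex_lmodType _)) -> C1_on U f ->
  exists2 M, 0 <= M & forall x y, K x -> K y -> `|f x - f y| <= M * enorm (x - y).
Proof.
move=> KU cK convK [df cD].
have bnd i : exists M, 0 <= M /\ forall z, K z -> `|'D_('e_i) f z| <= M.
  have [|M M0 HM] := @continuous_compact_bounded _ K (fun z => 'D_('e_i) f z) cK.
    by move=> z /set_mem Kz; exact/cD/KU.
  by exists M.
have [M HM] := boolp.choice bnd.
exists (\sum_i M i); first by apply: sumr_ge0 => i _; case: (HM i).
move=> x y Kx Ky; have [z Kz ->] := mean_value_convex KU convK df Kx Ky.
rewrite deriveE; last exact/df/KU.
rewrite {1}(row_sum_delta (x - y)) linear_sum /= mulr_suml.
apply: (le_trans (ler_norm_sum _ _ _)); apply: ler_sum => i _.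
rewrite linearZ /= -deriveE; last exact/df/KU.
rewrite normrZ mulrC; apply: ler_pM => //; last exact: normr_entry_le_enorm.
by case: (HM i) => _ /(_ z Kz).
Qed.

Lemma C1_family_lipschitz (I : finType) n (U K : set 'rV[R]_n)
    (f : I -> 'rV[R]_n -> R) :
  K `<=` U -> compact K -> convex_set (K : set (convex_lmodType _)) ->
  (forall i, C1_on U (f i)) ->
  exists2 M, 0 <= M & forall i x y, K x -> K y ->
    `|f i x - f i y| <= M * enorm (x - y).
Proof.
move=> KU cK convK C1f.
have lip i : exists M, 0 <= M /\ forall x y, K x -> K y ->
    `|f i x - f i y| <= M * enorm (x - y).
  by have [M M0 HM] := C1_lipschitz KU cK convK (C1f i); exists M.
have [M HM] := boolp.choice lip.
have M0 i : 0 <= M i by case: (HM i).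
exists (\sum_i M i) => [|i x y Kx Ky]; first exact: sumr_ge0.
case: (HM i) => _ /(_ x y Kx Ky) /le_trans; apply; apply: ler_wpM2r.
  exact: sqrtr_ge0.
by rewrite (bigD1 i) //= lerDl sumr_ge0.
Qed.

End LipschitzC1.

Lemma compact_setX_fst (T1 T2 : topologicalType) (A : set T1) (B : set T2) :
  B !=set0 -> compact (A `*` B) -> compact A.
Proof.
move=> [b Bb] cAB; have -> : A = fst @` (A `*` B).
  by apply/seteqP; split => [x Ax|_ [[x y] [Ax _] <-]] //; exists (x, b).
by apply: continuous_compact => //; apply: continuous_subspaceT => p; exact: cvg_fst.
Qed.

Lemma compact_setX_snd (T1 T2 : topologicalType) (A : set T1) (B : set T2) :
  A !=set0 -> compact (A `*` B) -> compact B.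
Proof.
move=> [a Aa] cAB; have -> : B = snd @` (A `*` B).
  by apply/seteqP; split => [y By|_ [[x y] [_ By] <-]] //; exists (a, y).
by apply: continuous_compact => //; apply: continuous_subspaceT => p; exact: cvg_snd.
Qed.

Section ParameterSpace.
Variables (R : realType) (d1 d2 d3 : nat).
Variables (Thi : set 'rV[R]_d1) (Tlo : set 'rV[R]_d2) (Tb : set 'rV[R]_d3).
Variable th : param R d1 d2 d3.
Hypothesis thT : Theta Thi Tlo Tb th.

Lemma compact_Theta_factors : compact (Theta Thi Tlo Tb) ->
  [/\ compact Thi, compact Tlo & compact Tb].
Proof.
case: thT => [[th1 th2] th3] cT.
have cT12 : compact (Thi `*` Tlo) by apply: compact_setX_fst cT; exists th.2.
split; last by apply: compact_setX_snd cT; exists (th.1.1, th.1.2).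
- by apply: compact_setX_fst cT12; exists th.1.2.
- by apply: compact_setX_snd cT12; exists th.1.1.
Qed.

Lemma convex_Theta_factors : convex_param (Theta Thi Tlo Tb) ->
  [/\ convex_set (Thi : set (convex_lmodType _)),
      convex_set (Tlo : set (convex_lmodType _)) &
      convex_set (Tb : set (convex_lmodType _))].
Proof.
case: thT => [[th1 th2] th3] cvT.
have l01 (l : {i01 R}) : 0 <= l%:num <= 1 by rewrite ge0 le1.
split=> x y l; rewrite !inE => Kx Ky.
- by have [[]] := cvT (x, th.1.2, th.2) (y, th.1.2, th.2) _ (conj (conj Kx th2) th3)
                  (conj (conj Ky th2) th3) (l01 l).
- by have [[]] := cvT (th.1.1, x, th.2) (th.1.1, y, th.2) _ (conj (conj th1 Kx) th3)
                  (conj (conj th1 Ky) th3) (l01 l).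
- by have [] := cvT (th.1.1, th.1.2, x) (th.1.1, th.1.2, y) _ (conj (conj th1 th2) Kx)
                  (conj (conj th1 th2) Ky) (l01 l).
Qed.

End ParameterSpace.

Section EuclideanNorm.
Variables (R : realType) (d1 d2 d3 : nat).

Lemma enorm_le_norm2 (x : param R d1 d2 d3) :
  [/\ enorm x.1.1 <= norm2 x, enorm x.1.2 <= norm2 x & enorm x.2 <= norm2 x].
Proof.
have sq0 n (v : 'rV[R]_n) : 0 <= \sum_j v ord0 j ^+ 2.
  by apply: sumr_ge0 => j _; exact: sqr_ge0.
have := sq0 _ x.1.1; have := sq0 _ x.1.2; have := sq0 _ x.2.
move=> h3 h2 h1; rewrite /norm2 /enorm !ler_sqrt ?addr_ge0 //; split; lra.
Qed.

Lemma norm2_psubxx (x : param R d1 d2 d3) : norm2 (psub x x) = 0.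
Proof.
by rewrite /norm2 /psub /= !subrr !big1 ?addr0 ?sqrtr0 // => i _; rewrite mxE expr0n.
Qed.

End EuclideanNorm.

Section FiniteFiltering.
Variables (R : realType) (I : finType).

Definition normalize_fin (f : I -> R) : I -> R := fun i => f i / \sum_j f j.

Definition tv_fin (p q : I -> R) : R := 2^-1 * \sum_i `|p i - q i|.

Lemma tv_normalize_fin_le (u v : I -> R) c :
  (forall i, 0 <= u i) -> (forall i, 0 <= v i) -> \sum_i v i = 1 ->
  \sum_i `|u i - v i| <= c * \sum_i u i ->
  tv_fin (normalize_fin u) v <= c.
Proof.
move=> u0 v0 v1 uv.
set U := \sum_i u i in uv *; set X := \sum_i `|u i - v i| in uv.
have U_dev : `|U - 1| <= X by rewrite -v1 -sumrB ler_norm_sum.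
have U_gt0 : 0 < U.
  rewrite lt_def sumr_ge0 // andbT; apply/eqP => U0; move: uv U_dev.
  by rewrite U0 mulr0 sub0r normrN normr1 => /(le_trans _) X0 /X0; rewrite ler10.
have sum_rescaled : \sum_i `|u i - U * v i| <= 2 * X.
  apply: (le_trans (y := \sum_i (`|u i - v i| + v i * `|U - 1|))).
    apply: ler_sum => i _; have -> : u i - U * v i = u i - v i - v i * (U - 1) by ring.
    by rewrite (le_trans (ler_normB _ _)) // normrM ger0_norm.
  by rewrite big_split /= -mulr_suml v1 mul1r -/X; lra.
rewrite /tv_fin /normalize_fin -/U.
have -> : \sum_i `|u i / U - v i| = (\sum_i `|u i - U * v i|) / U.
  rewrite mulr_suml; apply: eq_bigr => i _.
  have -> : u i / U - v i = (u i - U * v i) / U by field; rewrite gt_eqF.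
  by rewrite normrM [`|U^-1|]ger0_norm // invr_ge0 ltW.
have : (\sum_i `|u i - U * v i|) / U <= 2 * c by rewrite ler_pdivrMr //; lra.
lra.
Qed.

Definition smoothing_step (g gref : I -> I -> R) (r phi : I -> R) : I -> R :=
  fun j => \sum_i g i j * r j * phi i / \sum_k gref i k * r k.

Variables (gref : I -> I -> R) (r phi : I -> R).
Hypothesis gref_gt0 : forall i j, 0 < gref i j.
Hypothesis r_gt0 : forall j, 0 < r j.
Hypothesis phi_ge0 : forall i, 0 <= phi i.
Hypothesis phi_sum1 : \sum_i phi i = 1.

Lemma smoothing_normalizer_gt0 i : 0 < \sum_k gref i k * r k.
Proof.
rewrite (bigD1 i) //= ltr_pwDl ?mulr_gt0 // sumr_ge0 // => k _.
by rewrite mulr_ge0 // ltW.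
Qed.

Lemma smoothing_step_ge0 g : (forall i j, 0 <= g i j) ->
  forall j, 0 <= smoothing_step g gref r phi j.
Proof.
move=> g0 j; apply: sumr_ge0 => i _.
by rewrite divr_ge0 ?mulr_ge0 ?(ltW (r_gt0 j)) ?(ltW (smoothing_normalizer_gt0 i)).
Qed.

Lemma smoothing_step_sum1 : \sum_j smoothing_step gref gref r phi j = 1.
Proof.
rewrite /smoothing_step exchange_big /= -phi_sum1; apply: eq_bigr => i _.
under eq_bigr do rewrite -mulrA.
by rewrite -mulr_suml mulrCA divff ?mulr1 // gt_eqF ?smoothing_normalizer_gt0.
Qed.

Lemma smoothing_step_dist_le g c : (forall i j, `|g i j - gref i j| <= c * g i j) ->
  forall j, `|smoothing_step g gref r phi j - smoothing_step gref gref r phi j|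
            <= c * smoothing_step g gref r phi j.
Proof.
move=> gc j; rewrite -sumrB mulr_sumr (le_trans (ler_norm_sum _ _ _)) //.
apply: ler_sum => i _; rewrite -!mulrBl !mulrA -!mulrA.
have w0 : 0 <= r j * (phi i / \sum_k gref i k * r k).
  by rewrite mulr_ge0 ?divr_ge0 ?(ltW (r_gt0 j)) ?(ltW (smoothing_normalizer_gt0 i)).
by rewrite normrM (ger0_norm w0) [c * _]mulrA; apply: ler_wpM2r.
Qed.

Lemma tv_smoothing_step_le g c :
  (forall i j, 0 <= g i j) -> (forall i j, `|g i j - gref i j| <= c * g i j) ->
  tv_fin (normalize_fin (smoothing_step g gref r phi))
         (normalize_fin (smoothing_step gref gref r phi)) <= c.
Proof.
move=> g0 gc.
have -> : normalize_fin (smoothing_step gref gref r phi) = smoothing_step gref gref r phi.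
  by apply: funext => j; rewrite /normalize_fin smoothing_step_sum1 divr1.
apply: tv_normalize_fin_le; rewrite ?smoothing_step_sum1 //.
- exact: smoothing_step_ge0.
- by apply: smoothing_step_ge0 => i j; exact: ltW.
- by rewrite mulr_sumr; apply: ler_sum => j _; exact: smoothing_step_dist_le.
Qed.

End FiniteFiltering.

Section Model.
Variables (R : realType) (S A O : finType) (d1 d2 d3 : nat).
Variables (Thi : set 'rV[R]_d1) (Tlo : set 'rV[R]_d2) (Tb : set 'rV[R]_d3).
Variables (pihi : S -> O -> 'rV[R]_d1 -> R) (pilo : S -> O -> A -> 'rV[R]_d2 -> R).
Variables (pib : S -> O -> bool -> 'rV[R]_d3 -> R) (zeta : R).
Hypothesis SA : standing_assumption Thi Tlo Tb pihi pilo pib.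
Hypothesis zeta01 : 0 < zeta < 1.

Local Notation Theta := (Theta Thi Tlo Tb).
Local Notation h := (hfun zeta pihi pilo pib).

Lemma policy_bounds (x : param R d1 d2 d3) : Theta x ->
  forall st op o at_ b, [/\ 0 < pihi st o x.1.1 <= 1,
    0 < pilo st o at_ x.1.2 <= 1 & 0 < pib st op b x.2 <= 1].
Proof.
case: SA => Uhi [Ulo [Ub [_ [[sh sl sb] [Phi [Plo [Pb _]]]]]]] [[x1 x2] x3] st op o at_ b.
have [hi_gt0 hi1] := Phi st _ (sh _ x1).
have [lo_gt0 lo1] := Plo st o _ (sl _ x2).
have [b_gt0 b1] := Pb st op _ (sb _ x3).
rewrite hi_gt0 lo_gt0 b_gt0; split.
- by apply: (prob_entry_le1 (F := fun o => pihi st o x.1.1)) => // j; exact: ltW.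
- by apply: (prob_entry_le1 (F := fun a => pilo st o a x.1.2)) => // j; exact: ltW.
- by apply: (prob_entry_le1 (F := fun b => pib st op b x.2)) => // j; exact: ltW.
Qed.

Lemma pibar_bounds op st b o (x : 'rV[R]_d1) : 0 < pihi st o x <= 1 ->
  0 < pibar zeta pihi op st b o x <= 1.
Proof.
case: b => //= _; have /andP[z0 z1] := zeta01.
have O_ge1 : 1 <= #|O|%:R :> R by rewrite ler1n; apply/card_gt0P; exists o.
have O_gt0 : 0 < #|O|%:R :> R by apply: lt_le_trans O_ge1.
have unif_gt0 : 0 < zeta / #|O|%:R by rewrite divr_gt0.
have unif_le : zeta / #|O|%:R <= zeta by rewrite ler_pdivrMr // ler_pMr.
by case: (o == op); apply/andP; split; lra.
Qed.

Lemma hfun_gt0 x : Theta x -> forall op st at_ o b, 0 < h x op st at_ o b.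
Proof.
move=> Tx op st at_ o b; have [hi /andP[lo _] /andP[bb _]] := policy_bounds Tx st op o at_ b.
have /andP[hb _] := @pibar_bounds op st b o _ hi.
by rewrite /hfun !mulr_gt0.
Qed.

Section Lipschitz.
Variable th : param R d1 d2 d3.
Hypotheses (cvT : convex_param Theta) (cT : compact Theta) (thT : Theta th).

Lemma hfun_lipschitz : exists2 L, 0 <= L &
  forall op st at_ o b x y, Theta x -> Theta y ->
    `|h x op st at_ o b - h y op st at_ o b| <= L * norm2 (psub x y).
Proof.
have [cHi cLo cB] := compact_Theta_factors thT cT.
have [vHi vLo vB] := convex_Theta_factors thT cvT.
case: SA => Uhi [Ulo [Ub [_ [[sh sl sb] [_ [_ [_ [Chi [Clo Cb]]]]]]]]].
have [M1 M1_ge0 lip1] := C1_family_lipschitz (f := fun p : S * O => pihi p.1 p.2)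
  sh cHi vHi (fun p => Chi p.1 p.2).
have [M2 M2_ge0 lip2] := C1_family_lipschitz (f := fun p : S * O * A => pilo p.1.1 p.1.2 p.2)
  sl cLo vLo (fun p => Clo p.1.1 p.1.2 p.2).
have [M3 M3_ge0 lip3] := C1_family_lipschitz (f := fun p : S * O * bool => pib p.1.1 p.1.2 p.2)
  sb cB vB (fun p => Cb p.1.1 p.1.2 p.2).
exists (M3 + M1 + M2) => [|op st at_ o b x y Tx Ty]; first by rewrite !addr_ge0.
have [[x1 x2] x3] := Tx; have [[y1 y2] y3] := Ty.
have [n1 n2 n3] := enorm_le_norm2 (psub x y).
have in01 z : 0 < z <= 1 -> `|z| <= 1 by case/andP=> z0 z1; rewrite gtr0_norm.
have [hx lx bx] := policy_bounds Tx st op o at_ b.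
have [hy ly by_] := policy_bounds Ty st op o at_ b.
rewrite /hfun; apply: le_trans; first apply: normr_mul3B_le.
- exact/in01/pibar_bounds.
- exact/in01.
- exact/in01.
- exact/in01/pibar_bounds.
rewrite !mulrDl; apply: lerD; first apply: lerD.
- by apply: (le_trans (lip3 (st, op, b) _ _ x3 y3)); apply: ler_wpM2l.
- case: b {hx hy bx by_} => /=; last by rewrite subrr normr0 mulr_ge0 // sqrtr_ge0.
  by apply: (le_trans (lip1 (st, o) _ _ x1 y1)); apply: ler_wpM2l.
- by apply: (le_trans (lip2 (st, o, at_) _ _ x2 y2)); apply: ler_wpM2l.
Qed.

Local Notation Lip := (Lip_const zeta pihi pilo pib Thi Tlo Tb th).

Lemma Lip_const_ge0 delta : 0 <= Lip delta.
Proof.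
rewrite /Lip_const; apply: lb_le_inf => [|L []//].
by have [L L0 HL] := hfun_lipschitz; exists L; split=> // *; exact: HL.
Qed.

Lemma hfun_sub_le_Lip_const thh : Theta thh -> forall op st at_ o b,
  `|h thh op st at_ o b - h th op st at_ o b|
    <= Lip (norm2 (psub thh th)) * norm2 (psub thh th).
Proof.
move=> thhT op st at_ o b; rewrite /Lip_const; apply: ler_inf_mulr.
- by have [L L0 HL] := hfun_lipschitz; exists L; split=> // *; exact: HL.
- exact: sqrtr_ge0.
- by move=> L [_]; apply=> //; rewrite norm2_psubxx sqrtr_ge0.
Qed.

End Lipschitz.

Section Envelope.
Variables (s : int -> S) (a : int -> A) (t : int).

Lemma hmin_le_hfun x op o b : hmin zeta pihi pilo pib s a x t <= h x op (s t) (a t) o b.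
Proof. exact: (inf_range_fin_le _ (op, o, b)). Qed.

Lemma hmin_gt0 x (o0 : O) : Theta x -> 0 < hmin zeta pihi pilo pib s a x t.
Proof. by move=> Tx; apply: (inf_range_fin_gt0 (o0, o0, true)) => i; exact: hfun_gt0. Qed.

Definition h_kernel (x : param R d1 d2 d3) (p q : O * bool) : R :=
  h x p.1 (s t) (a t) q.1 q.2.

Lemma forwardE thh th (rhot phi : O -> bool -> R) o b :
  forward zeta pihi pilo pib s a thh th t rhot phi o b
  = normalize_fin (smoothing_step (h_kernel thh) (h_kernel th)
                    (fun q => rhot q.1 q.2) (fun p => phi p.1 p.2)) (o, b).
Proof.
have inner o' b' : \sum_op \sum_bp h thh op (s t) (a t) o' b' * rhot o' b' * phi op bp
      / (\sum_o'' \sum_b'' h th op (s t) (a t) o'' b'' * rhot o'' b'')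
    = smoothing_step (h_kernel thh) (h_kernel th)
        (fun q => rhot q.1 q.2) (fun p => phi p.1 p.2) (o', b').
  by rewrite pair_big; apply: eq_bigr => p _; rewrite pair_big.
rewrite /forward /normalize /normalize_fin inner pair_big /=.
by congr (_ / _); apply: eq_bigr; case=> o' b' _; rewrite inner.
Qed.

Lemma tv_forwardE thh th (rhot phi : O -> bool -> R) :
  tv (forward zeta pihi pilo pib s a thh th t rhot phi)
     (forward zeta pihi pilo pib s a th th t rhot phi)
  = tv_fin (normalize_fin (smoothing_step (h_kernel thh) (h_kernel th)
                             (fun q => rhot q.1 q.2) (fun p => phi p.1 p.2)))
           (normalize_fin (smoothing_step (h_kernel th) (h_kernel th)
                             (fun q => rhot q.1 q.2) (fun p => phi p.1 p.2))).
Proof.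
rewrite /tv /tv_fin pair_big /=; congr (_ * _).
by apply: eq_bigr; case=> o b _; rewrite /= !forwardE.
Qed.

End Envelope.
End Model.

Theorem lemma9 (R : realType) (S A O : finType) (d1 d2 d3 : nat)
  (Thi : set 'rV[R]_d1) (Tlo : set 'rV[R]_d2) (Tb : set 'rV[R]_d3)
  (pihi : S -> O -> 'rV[R]_d1 -> R) (pilo : S -> O -> A -> 'rV[R]_d2 -> R)
  (pib : S -> O -> bool -> 'rV[R]_d3 -> R) (zeta : R)
  (s : int -> S) (a : int -> A) (th thh : param R d1 d2 d3) (t : int)
  (rho : int -> O -> bool -> R) (phi : O -> bool -> R) :
  convex_param (Theta Thi Tlo Tb) ->
  compact (Theta Thi Tlo Tb) ->
  standing_assumption Thi Tlo Tb pihi pilo pib ->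
  0 < zeta < 1 ->
  Theta Thi Tlo Tb th -> Theta Thi Tlo Tb thh ->
  (forall u : int, is_pos_prob (rho u)) ->
  (forall (u : int) (o : O) (b : bool),
      backward zeta pihi pilo pib s a th u (rho (u + 1)) o b = rho u o b) ->
  is_prob phi ->
  tv (forward zeta pihi pilo pib s a thh th t (rho t) phi)
     (forward zeta pihi pilo pib s a th th t (rho t) phi)
  <= hmax zeta pihi pilo pib s a th t / hmin zeta pihi pilo pib s a th t
     * (Lip_const zeta pihi pilo pib Thi Tlo Tb th (norm2 (psub thh th))
        * norm2 (psub thh th)
        / hmin zeta pihi pilo pib s a thh t).
Proof.
move=> cvT cT SA zeta01 thT thhT rho_pos _ [phi_ge0 phi_sum1].
have w0 : O.
  case: (pickP (@predT O)) => [w _|O_empty]; first exact: w.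
  by move: phi_sum1; rewrite big_pred0 // => /eqP; rewrite eq_sym oner_eq0.
set d := norm2 (psub thh th); set Lc := Lip_const _ _ _ _ _ _ _ th d.
set m := hmin _ _ _ _ s a thh t; set c := Lc * d / m.
have m_gt0 : 0 < m := hmin_gt0 SA zeta01 s a t w0 thhT.
have c_ge0 : 0 <= c.
  by rewrite divr_ge0 ?mulr_ge0 ?(Lip_const_ge0 SA zeta01 cvT cT thT) ?sqrtr_ge0 ?ltW.
apply: (le_trans (y := c)); last first.
  have hmin_th_gt0 := hmin_gt0 SA zeta01 s a t w0 thT.
  rewrite -{1}[c]mul1r ler_wpM2r // ler_pdivlMr // mul1r.
  exact: (inf_range_fin_le_sup _ (w0, w0, true)).
rewrite tv_forwardE; apply: tv_smoothing_step_le => [p q|q|p||p q|p q].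
- exact: (hfun_gt0 SA zeta01 thT).
- exact: (rho_pos t).1.
- exact: phi_ge0.
- by rewrite -phi_sum1 pair_big.
- exact/ltW/(hfun_gt0 SA zeta01 thhT).
- apply: le_trans (hfun_sub_le_Lip_const SA zeta01 cvT cT thT thhT _ _ _ _ _) _.
  rewrite -/d -/Lc -(divfK (lt0r_neq0 m_gt0) (Lc * d)) -/c.
  exact/ler_wpM2l/hmin_le_hfun.
Qed.
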